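(* Let $n\ge2$, let $x,y\in\mathbb C^n$, and let $B=xe_n^\ast+e_ny^\ast\in M_n(\mathbb C)$ have nonzero entries at positions $(1,n)$, $(n,1)$ and $(n,n)$. Then $B$ has rank two, so its singular value decomposition has the form $B=\sigma_1u_1v_1^\ast+\sigma_2u_2v_2^\ast$ with $\sigma_1\ge\sigma_2>0$ and orthonormal pairs $u_1,u_2$ and $v_1,v_2$; both summands $\sigma_iu_iv_i^\ast$ have nonzero $(1,1)$ entry; and $\sigma_1(B)>\sigma_2(B)$.
   Context: $e_1,\dots,e_n$ is the standard basis of $\mathbb C^n$ (column vectors), and $\sigma_1(B)\ge\sigma_2(B)\ge\dots$ denote the singular values of $B$. *)

From HB Require Import structures.
From mathcomp Require Import all_boot all_order all_algebra.
From mathcomp Require Import complex.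
From mathcomp Require Import reals.
Set Implicit Arguments. Unset Strict Implicit. Unset Printing Implicit Defensive.
Import Order.TTheory GRing.Theory Num.Theory.
Local Open Scope ring_scope.

Definition adjmx (C : numClosedFieldType) (m n : nat) (A : 'M[C]_(m, n)) : 'M[C]_(n, m) :=
  map_mx Num.conj A^T.

Definition cdot (C : numClosedFieldType) (n : nat) (u v : 'cV[C]_n) : C :=
  (adjmx u *m v) 0 0.

Definition orthonormal2 (C : numClosedFieldType) (n : nat) (u1 u2 : 'cV[C]_n) : Prop :=
  [/\ cdot u1 u1 = 1, cdot u2 u2 = 1 & cdot u1 u2 = 0].

Definition e_last (C : numClosedFieldType) (k : nat) : 'cV[C]_k.+2 :=
  delta_mx ord_max 0.

Definition Bmat (C : numClosedFieldType) (k : nat) (x y : 'cV[C]_k.+2) : 'M[C]_k.+2 :=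
  x *m adjmx (e_last C k) + e_last C k *m adjmx y.

Definition svd2 (R : rcfType) (n : nat) (B : 'M[R[i]]_n) (s1 s2 : R)
  (u1 u2 v1 v2 : 'cV[R[i]]_n) : Prop :=
  [/\ s2 <= s1, 0 < s2, orthonormal2 u1 u2, orthonormal2 v1 v2 &
      B = (s1%:C)%C *: (u1 *m adjmx v1) + (s2%:C)%C *: (u2 *m adjmx v2)].

(* Write x = x_n e_n + w and y = y_n e_n + z with w, z orthogonal to e_n, so that
   B = c e_n e_n^* + w e_n^* + e_n z^* with c = x_n + conj y_n.  Absorbing the phase of
   c into the basis vectors gives B = E M F^* where E, F have orthonormal columns and
   M = [[r, a], [b, 0]] is real with r, a, b > 0.  Hence rank B = rank M = 2, and an SVD
   of B is the image of a real SVD of M, obtained from the eigenvectors of M^T M.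
   Conversely, any SVD gives B v_i = s_i u_i and B^* u_i = s_i v_i.  Row 1 of B is
   x_1 e_n^* and column 1 is conj(y_1) e_n, so a singular vector with vanishing first
   entry would be a multiple of e_n, hence zero: all u_i(1), v_i(1) are nonzero.  If
   s_1 = s_2 = s then B B^* B = s^2 B, which fails at entry (1,1) since B_11 = 0 but
   (B B^* B)_11 = x_1 (y_n + conj x_n) conj y_1. *)

From HB Require Import structures.
From mathcomp Require Import all_boot all_order all_algebra.
From mathcomp Require Import complex.
From mathcomp Require Import reals.
From mathcomp Require Import ring lra.
Set Implicit Arguments. Unset Strict Implicit. Unset Printing Implicit Defensive.
Import Order.TTheory GRing.Theory Num.Theory.
Local Open Scope ring_scope.

Section Mx2.
Variable R : nzRingType.

Definition mx2 (a b c d : R) : 'M[R]_(1 + 1) := block_mx a%:M b%:M c%:M d%:M.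

Definition row2 (a b : R) : 'rV[R]_(1 + 1) := row_mx a%:M b%:M.

Lemma mx2_mul a b c d a' b' c' d' :
  mx2 a b c d *m mx2 a' b' c' d' =
  mx2 (a * a' + b * c') (a * b' + b * d') (c * a' + d * c') (c * b' + d * d').
Proof. by rewrite /mx2 mulmx_block -!scalar_mxM -!raddfD. Qed.

Lemma tr_mx2 a b c d : (mx2 a b c d)^T = mx2 a c b d.
Proof. by rewrite /mx2 tr_block_mx !tr_scalar_mx. Qed.

Lemma scalar_mx2 a : a%:M = mx2 a 0 0 a.
Proof. by rewrite /mx2 raddf0 -scalar_mx_block. Qed.

Lemma scale_mx2 k a b c d : k *: mx2 a b c d = mx2 (k * a) (k * b) (k * c) (k * d).
Proof. by rewrite /mx2 scale_block_mx -!scale_scalar_mx. Qed.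

Lemma diag_mx2 a b : diag_mx (row2 a b) = mx2 a 0 0 b.
Proof.
rewrite /mx2 /row2 diag_mx_row raddf0.
by congr block_mx; apply/matrixP => i j; rewrite !ord1 !mxE.
Qed.

End Mx2.

Lemma map_mx2 (R S : nzRingType) (f : {rmorphism R -> S}) a b c d :
  map_mx f (mx2 a b c d) = mx2 (f a) (f b) (f c) (f d).
Proof. by rewrite /mx2 map_block_mx !map_scalar_mx. Qed.

Lemma map_row2 (R S : nzRingType) (f : R -> S) a b :
  map_mx f (row2 a b) = row2 (f a) (f b).
Proof. by rewrite /row2 map_row_mx; congr row_mx; apply/matrixP => i j; rewrite !ord1 !mxE. Qed.

Lemma mx2_unit (F : fieldType) (r a b : F) : a != 0 -> b != 0 -> mx2 r a b 0 \in unitmx.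
Proof.
move=> a0 b0; suff /mulmx1_unit[] : mx2 r a b 0 *m mx2 0 b^-1 a^-1 (- r / (a * b)) = 1%:M by [].
by rewrite mx2_mul scalar_mx2; congr mx2; field; rewrite ?a0 ?b0.
Qed.

Section Adjoint.
Variable C : numClosedFieldType.

Lemma adjmxE m n (A : 'M[C]_(m, n)) i j : adjmx A i j = (A j i)^*.
Proof. by rewrite !mxE. Qed.

Lemma adjmxM m n p (A : 'M[C]_(m, n)) (B : 'M[C]_(n, p)) :
  adjmx (A *m B) = adjmx B *m adjmx A.
Proof. by rewrite /adjmx trmx_mul map_mxM. Qed.

Lemma adjmxD m n (A B : 'M[C]_(m, n)) : adjmx (A + B) = adjmx A + adjmx B.
Proof. by rewrite /adjmx linearD map_mxD. Qed.

Lemma adjmxZ m n a (A : 'M[C]_(m, n)) : adjmx (a *: A) = a^* *: adjmx A.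
Proof. by apply/matrixP=> i j; rewrite !mxE rmorphM. Qed.

Lemma adjmxK m n (A : 'M[C]_(m, n)) : adjmx (adjmx A) = A.
Proof. exact: trmxCK. Qed.

Lemma adjmx_row_mx m n1 n2 (A1 : 'M[C]_(m, n1)) (A2 : 'M[C]_(m, n2)) :
  adjmx (row_mx A1 A2) = col_mx (adjmx A1) (adjmx A2).
Proof. by rewrite /adjmx tr_row_mx map_col_mx. Qed.

Lemma cdotE n (u v : 'cV[C]_n) : cdot u v = \sum_i (u i 0)^* * v i 0.
Proof. by rewrite /cdot mxE; apply: eq_bigr => i _; rewrite adjmxE. Qed.

Lemma cdotC n (u v : 'cV[C]_n) : cdot v u = (cdot u v)^*.
Proof.
rewrite !cdotE rmorph_sum; apply: eq_bigr => i _.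
by rewrite rmorphM /= conjCK mulrC.
Qed.

Lemma cdotZr n a (u v : 'cV[C]_n) : cdot u (a *: v) = a * cdot u v.
Proof. by rewrite /cdot -scalemxAr mxE. Qed.

Lemma cdotZl n a (u v : 'cV[C]_n) : cdot (a *: u) v = a^* * cdot u v.
Proof. by rewrite cdotC cdotZr rmorphM /= -cdotC. Qed.

Lemma mul_adjmx_cV n (u v : 'cV[C]_n) : adjmx u *m v = (cdot u v)%:M.
Proof. by apply/matrixP=> i j; rewrite !ord1 [RHS]mxE mulr1n. Qed.

Lemma cdot_gt0 n (u : 'cV[C]_n) : u != 0 -> 0 < cdot u u.
Proof.
have ge0 i : 0 <= (u i 0)^* * u i 0 by rewrite mulrC mul_conjC_ge0.
rewrite lt_def cdotE sumr_ge0 ?andbT // => u0.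
apply: contraNneq u0 => /psumr_eq0P u0; apply/eqP/matrixP => i j.
by rewrite ord1 mxE; apply/eqP; rewrite -mul_conjC_eq0 mulrC u0.
Qed.

Lemma cdot_eq1_neq0 n (u : 'cV[C]_n) : cdot u u = 1 -> u != 0.
Proof.
apply: contra_eqN => /eqP ->; rewrite cdotE big1 => [|i _]; last by rewrite mxE mulr0.
by rewrite eq_sym oner_neq0.
Qed.

Lemma orthonormal2_row_mx n (u1 u2 : 'cV[C]_n) :
  orthonormal2 u1 u2 <-> adjmx (row_mx u1 u2) *m row_mx u1 u2 = 1%:M.
Proof.
rewrite adjmx_row_mx mul_col_row !mul_adjmx_cV (scalar_mx_block 1 1).
split=> [[u11 u22 u12]|/eq_block_mx[]].
  by rewrite [cdot u2 u1]cdotC u11 u22 u12 conjC0 raddf0.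
by move=> /matrixP/(_ 0 0) + /matrixP/(_ 0 0) + _ /matrixP/(_ 0 0); rewrite !mxE !mulr1n.
Qed.

Lemma orthonormal2_scale n (u1 u2 : 'cV[C]_n) k1 k2 :
  k1^* * k1 * cdot u1 u1 = 1 -> k2^* * k2 * cdot u2 u2 = 1 -> cdot u1 u2 = 0 ->
  orthonormal2 (k1 *: u1) (k2 *: u2).
Proof. by move=> u11 u22 u12; split; rewrite cdotZl cdotZr mulrA // u12 mulr0. Qed.

Lemma mul_row_mx2_adjmx n (u1 u2 v1 v2 : 'cV[C]_n) a b c d :
  row_mx u1 u2 *m mx2 a b c d *m adjmx (row_mx v1 v2) =
  (a *: u1 + c *: u2) *m adjmx v1 + (b *: u1 + d *: u2) *m adjmx v2.
Proof. by rewrite mul_row_block !mul_mx_scalar adjmx_row_mx mul_row_col. Qed.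

Lemma mxrank_isometry_sandwich m n p q (E : 'M[C]_(m, n)) (M : 'M[C]_(n, p))
    (F : 'M[C]_(q, p)) :
  adjmx E *m E = 1%:M -> adjmx F *m F = 1%:M -> \rank (E *m M *m adjmx F) = \rank M.
Proof.
move=> EE FF; apply/eqP; rewrite eqn_leq; apply/andP; split.
  exact: leq_trans (mxrankM_maxl _ _) (mxrankM_maxr _ _).
set X := E *m M *m adjmx F; have -> : M = adjmx E *m X *m F.
  by rewrite /X !mulmxA EE mul1mx -mulmxA FF mulmx1.
exact: leq_trans (mxrankM_maxl _ _) (mxrankM_maxr _ _).
Qed.

End Adjoint.

Section RankTwoDecomposition.
Variable C : numClosedFieldType.

Lemma decomp2_mulmx m n (B : 'M[C]_(m, n)) (u1 u2 : 'cV[C]_m) (v1 v2 : 'cV[C]_n) a1 a2 :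
  B = a1 *: (u1 *m adjmx v1) + a2 *: (u2 *m adjmx v2) -> orthonormal2 v1 v2 ->
  B *m v1 = a1 *: u1 /\ B *m v2 = a2 *: u2.
Proof.
move=> -> [v11 v22 v12]; have v21 : cdot v2 v1 = 0 by rewrite cdotC v12 conjC0.
rewrite !mulmxDl -!scalemxAl -!mulmxA !mul_adjmx_cV v11 v22 v12 v21.
by rewrite !mul_mx_scalar !scale0r !scaler0 addr0 add0r !scale1r.
Qed.

Lemma adjmx_decomp2 m n (B : 'M[C]_(m, n)) (u1 u2 : 'cV[C]_m) (v1 v2 : 'cV[C]_n) a1 a2 :
  B = a1 *: (u1 *m adjmx v1) + a2 *: (u2 *m adjmx v2) ->
  adjmx B = a1^* *: (v1 *m adjmx u1) + a2^* *: (v2 *m adjmx u2).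
Proof. by move=> ->; rewrite adjmxD !adjmxZ !adjmxM !adjmxK. Qed.

Lemma decomp2_equal_triple m n (B : 'M[C]_(m, n)) (u1 u2 : 'cV[C]_m) (v1 v2 : 'cV[C]_n) a :
  B = a *: (u1 *m adjmx v1) + a *: (u2 *m adjmx v2) ->
  orthonormal2 u1 u2 -> orthonormal2 v1 v2 ->
  B *m (adjmx B *m B) = (a * a^*) *: B.
Proof.
move=> dB ou ov; have [Bv1 Bv2] := decomp2_mulmx dB ov.
have [B'u1 B'u2] := decomp2_mulmx (adjmx_decomp2 dB) ou.
have -> : adjmx B *m B = (a * a^*) *: (v1 *m adjmx v1 + v2 *m adjmx v2).
  rewrite {2}dB mulmxDr -!scalemxAr !mulmxA B'u1 B'u2 -!scalemxAl.
  by rewrite !scalerA scalerDr.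
by rewrite -scalemxAr mulmxDr !mulmxA Bv1 Bv2 -!scalemxAl -dB.
Qed.

End RankTwoDecomposition.

Section RealSVD.
Variable R : rcfType.

Lemma svd_of_eigen n (M Q : 'M[R]_n) (d : 'rV[R]_n) :
  Q^T *m Q = 1%:M -> M^T *m M *m Q = Q *m diag_mx d -> (forall i, 0 < d 0 i) ->
  let P := M *m Q *m diag_mx (map_mx (fun t => (Num.sqrt t)^-1) d) in
  P^T *m P = 1%:M /\ M = P *m diag_mx (map_mx Num.sqrt d) *m Q^T.
Proof.
move=> QQ eigQ d_gt0; set S1 := diag_mx _; move=> P.
have sqrt_neq0 i : Num.sqrt (d 0 i) != 0 by rewrite gt_eqF // sqrtr_gt0.
split.
  have -> : P^T *m P = S1 *m (Q^T *m (M^T *m M *m Q)) *m S1.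
    by rewrite !trmx_mul tr_diag_mx !mulmxA.
  rewrite eigQ mulmxA QQ mul1mx !mulmx_diag -diag_const_mx; congr diag_mx.
  apply/rowP => i; rewrite !mxE -{2}(sqr_sqrtr (ltW (d_gt0 i))).
  by rewrite expr2 mulrA mulVf // mul1r divff.
rewrite /P -(mulmxA (M *m Q)); have -> : S1 *m diag_mx (map_mx Num.sqrt d) = 1%:M.
  by rewrite mulmx_diag -diag_const_mx; congr diag_mx; apply/rowP => i; rewrite !mxE mulVf.
by rewrite mulmx1 -mulmxA (mulmx1C QQ) mulmx1.
Qed.

Lemma mx2_eigen (r a b h : R) :
  h ^+ 2 + h * (r ^+ 2 + b ^+ 2 - a ^+ 2) - (r * a) ^+ 2 = 0 ->
  let Q := mx2 (r * a) (- h) h (r * a) in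
  (mx2 r a b 0)^T *m mx2 r a b 0 *m Q = Q *m diag_mx (row2 (h + r ^+ 2 + b ^+ 2) (a ^+ 2 - h)).
Proof. by move=> hQ Q; rewrite tr_mx2 !mx2_mul diag_mx2 mx2_mul; congr mx2; lra. Qed.

(* A root h for which the eigenvalues a^2 - h <= h + r^2 + b^2 of mx2_eigen are positive. *)
Lemma mx2_eigen_root (r a b : R) : 0 < r -> 0 < a -> 0 < b ->
  exists h, [/\ h ^+ 2 + h * (r ^+ 2 + b ^+ 2 - a ^+ 2) - (r * a) ^+ 2 = 0,
                0 < a ^+ 2 - h & a ^+ 2 - h <= h + r ^+ 2 + b ^+ 2].
Proof.
move=> r_gt0 a_gt0 b_gt0; pose T := r ^+ 2 + b ^+ 2 - a ^+ 2.
pose D := Num.sqrt (T ^+ 2 + 4%:R * (r * a) ^+ 2).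
have D_ge0 : 0 <= D := sqrtr_ge0 _.
have DD : D ^+ 2 = T ^+ 2 + 4%:R * (r * a) ^+ 2.
  by rewrite sqr_sqrtr // addr_ge0 ?sqr_ge0 // mulr_ge0 ?sqr_ge0.
have D_lt : D < r ^+ 2 + a ^+ 2 + b ^+ 2.
  have ab_gt0 : 0 < (a * b) ^+ 2 by rewrite exprn_gt0 ?mulr_gt0.
  rewrite -[X in _ < X]ger0_norm ?addr_ge0 ?sqr_ge0 // -sqrtr_sqr ltr_sqrt /T.
    lra.
  by rewrite exprn_gt0 // !addr_gt0 ?exprn_gt0.
have TE : T = r ^+ 2 + b ^+ 2 - a ^+ 2 by [].
by exists ((D - T) / 2%:R); rewrite -TE; split; lra.
Qed.

Lemma svd_mx2 (r a b : R) : 0 < r -> 0 < a -> 0 < b ->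
  exists (P Q : 'M[R]_(1 + 1)) (s1 s2 : R),
    [/\ P^T *m P = 1%:M, Q^T *m Q = 1%:M, mx2 r a b 0 = P *m mx2 s1 0 0 s2 *m Q^T,
        s2 <= s1 & 0 < s2].
Proof.
move=> r_gt0 a_gt0 b_gt0; have [h [hQ d2_gt0 le_d21]] := mx2_eigen_root r_gt0 a_gt0 b_gt0.
pose d := row2 (h + r ^+ 2 + b ^+ 2) (a ^+ 2 - h).
have d_gt0 i : 0 < d 0 i.
  by rewrite mxE; case: splitP => j _; rewrite ord1 mxE mulr1n //; lra.
pose K := (r * a) ^+ 2 + h ^+ 2.
have K_gt0 : 0 < K by rewrite ltr_pwDl ?sqr_ge0 // exprn_gt0 // mulr_gt0.
pose Q := (Num.sqrt K)^-1 *: mx2 (r * a) (- h) h (r * a).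
have QQ : Q^T *m Q = 1%:M.
  have kK : (Num.sqrt K)^-1 ^+ 2 * K = 1.
    by rewrite -{2}(sqr_sqrtr (ltW K_gt0)) -exprMn mulVf ?expr1n // gt_eqF ?sqrtr_gt0.
  rewrite /Q !scale_mx2 tr_mx2 mx2_mul scalar_mx2; congr mx2; rewrite -?kK /K; ring.
have eigQ : (mx2 r a b 0)^T *m mx2 r a b 0 *m Q = Q *m diag_mx d.
  by rewrite /Q -!scalemxAr -scalemxAl mx2_eigen.
have [PP svdM] := svd_of_eigen QQ eigQ d_gt0.
exists (mx2 r a b 0 *m Q *m diag_mx (map_mx (fun t => (Num.sqrt t)^-1) d)), Q.
exists (Num.sqrt (h + r ^+ 2 + b ^+ 2)), (Num.sqrt (a ^+ 2 - h)); split => //.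
- by rewrite {1}svdM !map_row2 !diag_mx2.
- exact: ler_wsqrtr.
- by rewrite sqrtr_gt0.
Qed.

End RealSVD.

Section ComplexLift.
Variable R : rcfType.
Local Notation C := R[i].
Local Notation toC := (real_complex R).

Lemma toC_neq0 (t : R) : (toC t == 0) = (t == 0).
Proof. exact: (inj_eq (@complexI R)). Qed.

Lemma conj_realC (s : R) : (toC s)^* = toC s.
Proof. exact: conjc_real. Qed.

Lemma adjmx_map_real m n (A : 'M[R]_(m, n)) : adjmx (map_mx toC A) = map_mx toC A^T.
Proof. by apply/matrixP => i j; rewrite !mxE conj_realC. Qed.

Lemma isometry_mul_real m n p (E : 'M[C]_(m, n)) (O : 'M[R]_(n, p)) :
  adjmx E *m E = 1%:M -> O^T *m O = 1%:M ->
  adjmx (E *m map_mx toC O) *m (E *m map_mx toC O) = 1%:M.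
Proof.
move=> EE OO; rewrite adjmxM adjmx_map_real mulmxA -(mulmxA _ _ E) EE mulmx1.
by rewrite -map_mxM OO map_scalar_mx rmorph1.
Qed.

Lemma gt0_realC (z : C) : 0 < z -> exists2 t : R, 0 < t & toC t = z.
Proof.
move=> z_gt0; have /complex_realP[t zt] := gtr0_real z_gt0.
by exists t; rewrite // -ltcR -zt.
Qed.

Lemma cdot_sqr_realC n (u : 'cV[C]_n) :
  u != 0 -> exists2 b : R, 0 < b & cdot u u = toC b ^+ 2.
Proof.
move=> /cdot_gt0 /gt0_realC[t t_gt0 <-]; exists (Num.sqrt t); first by rewrite sqrtr_gt0.
by rewrite -rmorphXn sqr_sqrtr ?ltW.
Qed.

Lemma polarC (c : C) :
  c != 0 -> exists (r : R) (om : C), [/\ 0 < r, toC r * om = c & om * om^* = 1].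
Proof.
rewrite -normr_gt0 => /gt0_realC[r r_gt0 rc]; have c0 : `|c| != 0 by rewrite -rc gt_eqF ?ltcR.
exists r, (c / `|c|); split => //; first by rewrite rc mulrCA divff ?mulr1.
by rewrite rmorphM fmorphV /= conj_normC mulrACA -normCK -invfM -expr2 divff ?expf_neq0.
Qed.

Lemma rank2_phase_form n (e w z : 'cV[C]_n) (c om : C) (r a b : R) :
  toC r * om = c -> om * om^* = 1 -> a != 0 -> b != 0 ->
  c *: (e *m adjmx e) + w *m adjmx e + e *m adjmx z =
  row_mx (om *: e) ((toC b)^-1 *: w) *m mx2 (toC r) (toC a) (toC b) 0
    *m adjmx (row_mx e ((om / toC a) *: z)).
Proof.
rewrite -!toC_neq0 => rom omc a0 b0.
rewrite mul_row_mx2_adjmx scale0r addr0 !scalerA rom (divff b0) scale1r mulmxDl -scalemxAl.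
rewrite adjmxZ -scalemxAl -scalemxAr scalerA rmorphM fmorphV /= conj_realC.
by rewrite -mulrA [om * _]mulrA omc mul1r divff // scale1r.
Qed.

Lemma svd2_row_mx n (u1 u2 v1 v2 : 'cV[C]_n) (s1 s2 : R) :
  orthonormal2 u1 u2 -> orthonormal2 v1 v2 -> s2 <= s1 -> 0 < s2 ->
  svd2 (row_mx u1 u2 *m mx2 (toC s1) 0 0 (toC s2) *m adjmx (row_mx v1 v2)) s1 s2 u1 u2 v1 v2.
Proof.
move=> ou ov le_s21 s2_gt0; split; [exact: le_s21 | exact: s2_gt0 | exact: ou | exact: ov |].
by rewrite mul_row_mx2_adjmx !scale0r addr0 add0r !scalemxAl.
Qed.

Lemma svd2_of_normal_form n (e1 e2 f1 f2 : 'cV[C]_n) (r a b : R) :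
  orthonormal2 e1 e2 -> orthonormal2 f1 f2 -> 0 < r -> 0 < a -> 0 < b ->
  exists (s1 s2 : R) (u1 u2 v1 v2 : 'cV[C]_n),
    svd2 (row_mx e1 e2 *m mx2 (toC r) (toC a) (toC b) 0 *m adjmx (row_mx f1 f2))
      s1 s2 u1 u2 v1 v2.
Proof.
move=> /orthonormal2_row_mx oE /orthonormal2_row_mx oF r_gt0 a_gt0 b_gt0.
have [P [Q [s1 [s2 [PP QQ dM le_s21 s2_gt0]]]]] := svd_mx2 r_gt0 a_gt0 b_gt0.
pose U := row_mx e1 e2 *m map_mx toC P; pose V := row_mx f1 f2 *m map_mx toC Q.
have oU : orthonormal2 (lsubmx U) (rsubmx U).
  by apply/orthonormal2_row_mx; rewrite hsubmxK isometry_mul_real.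
have oV : orthonormal2 (lsubmx V) (rsubmx V).
  by apply/orthonormal2_row_mx; rewrite hsubmxK isometry_mul_real.
exists s1, s2, (lsubmx U), (rsubmx U), (lsubmx V), (rsubmx V).
have -> : mx2 (toC r) (toC a) (toC b) 0 = map_mx toC (mx2 r a b 0) by rewrite map_mx2 rmorph0.
rewrite dM !map_mxM -(adjmx_map_real Q) !mulmxA -mulmxA -adjmxM -/U -/V map_mx2 rmorph0.
rewrite -{1}[U]hsubmxK -{1}[V]hsubmxK.
exact: svd2_row_mx.
Qed.

End ComplexLift.

Section Bmat.
Variables (C : numClosedFieldType) (k : nat).
Local Notation N := (@ord_max k.+1).
Local Notation e := (e_last C k).
Implicit Types x y u v : 'cV[C]_k.+2.

Lemma ord0_neq_max : (0 : 'I_k.+2) != N.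
Proof. by []. Qed.

Lemma e_lastE i : e i 0 = (i == N)%:R.
Proof. by rewrite mxE andbT. Qed.

Lemma cdot_e_last v : cdot e v = v N 0.
Proof.
rewrite cdotE (bigD1 N) //= e_lastE eqxx conjC1 mul1r big1 ?addr0 // => i /negbTE iN.
by rewrite e_lastE iN conjC0 mul0r.
Qed.

Lemma cdot_e_lastr v : cdot v e = (v N 0)^*.
Proof. by rewrite cdotC cdot_e_last. Qed.

Lemma cdot_e_last_self : cdot e e = 1.
Proof. by rewrite cdot_e_last e_lastE eqxx. Qed.

Lemma adjmx_Bmat x y : adjmx (Bmat x y) = Bmat y x.
Proof. by rewrite /Bmat adjmxD !adjmxM !adjmxK addrC. Qed.

Lemma Bmat_mulmx x y v : Bmat x y *m v = v N 0 *: x + cdot y v *: e.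
Proof. by rewrite /Bmat mulmxDl -!mulmxA !mul_adjmx_cV cdot_e_last !mul_mx_scalar. Qed.

Lemma BmatE x y i j : Bmat x y i j = x i 0 * (j == N)%:R + (i == N)%:R * (y j 0)^*.
Proof. by rewrite !mxE !big_ord1 !adjmxE !e_lastE !rmorph_nat. Qed.

Lemma Bmat_corners x y :
  [/\ Bmat x y 0 0 = 0, Bmat x y 0 N = x 0 0, Bmat x y N 0 = (y 0 0)^*
    & Bmat x y N N = x N 0 + (y N 0)^*].
Proof.
by rewrite !BmatE eqxx (negbTE ord0_neq_max) !(mulr0, mul0r, mulr1, mul1r, addr0, add0r).
Qed.

Lemma Bmat_split x y :
  Bmat x y = (x N 0 + (y N 0)^*) *: (e *m adjmx e) + (x - x N 0 *: e) *m adjmx e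
             + e *m adjmx (y - y N 0 *: e).
Proof.
apply/matrixP => i j; rewrite BmatE !mxE !big_ord1 !mxE !andbT.
by rewrite !(rmorphB, rmorphM, rmorph_nat) /=; ring.
Qed.

Lemma Bmat_triple00 x y :
  (Bmat x y *m (adjmx (Bmat x y) *m Bmat x y)) 0 0 = x 0 0 * ((y N 0 + (x N 0)^*) * (y 0 0)^*).
Proof.
have [_ B0N BN0 _] := Bmat_corners x y; have [_ _ _ B'NN] := Bmat_corners y x.
have row0 j : j != N -> Bmat x y 0 j = 0.
  by move=> /negbTE jN; rewrite BmatE jN (negbTE ord0_neq_max) mulr0 mul0r addr0.
have col0 j : j != N -> Bmat x y j 0 = 0.
  by move=> /negbTE jN; rewrite BmatE jN (negbTE ord0_neq_max) mulr0 mul0r addr0.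
rewrite adjmx_Bmat; set B := Bmat x y; set B' := Bmat y x.
rewrite mxE (bigD1 N) //= big1 => [|j /row0 ->]; last by rewrite mul0r.
rewrite [(_ *m _) _ _]mxE (bigD1 N) //= big1 => [|j /col0 ->]; last by rewrite mulr0.
by rewrite B0N BN0 B'NN !addr0.
Qed.

Lemma Bmat_singular_head x y u v (s : C) :
  x 0 0 != 0 -> x N 0 + (y N 0)^* != 0 -> s != 0 ->
  Bmat x y *m v = s *: u -> Bmat y x *m u = s *: v -> u != 0 -> u 0 0 != 0.
Proof.
move=> x0 c0 s0 Bv B'u; apply: contra_neq => u00.
have vN : v N 0 = 0.
  move/matrixP/(_ 0 0): Bv; rewrite Bmat_mulmx !mxE (negbTE ord0_neq_max) mulr0 addr0 u00 mulr0.
  by move/eqP; rewrite mulf_eq0 (negbTE x0) orbF => /eqP.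
have ue : u = (s^-1 * cdot y v) *: e.
  by rewrite -scalerA -[u](scalerK s0) -Bv Bmat_mulmx vN scale0r add0r.
move/matrixP/(_ N 0): B'u; rewrite Bmat_mulmx ue cdotZr cdot_e_lastr !mxE eqxx vN mulr0 mulr1.
rewrite /= mulr1 -mulrDr => /eqP; rewrite mulf_eq0 => /orP[/eqP ->|]; first by rewrite scale0r.
by rewrite -(conjCK (y N 0)) -rmorphD conjC_eq0 addrC (negbTE c0).
Qed.

End Bmat.

Section BmatSVD.
Variables (R : rcfType) (k : nat).
Local Notation C := R[i].
Local Notation toC := (real_complex R).
Local Notation N := (@ord_max k.+1).
Local Notation e := (e_last C k).

Variables x y : 'cV[C]_k.+2.
Hypotheses (B0N : Bmat x y 0 N != 0) (BN0 : Bmat x y N 0 != 0) (BNN : Bmat x y N N != 0).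

Let x0 : x 0 0 != 0. Proof. by have [_ <- _ _] := Bmat_corners x y. Qed.
Let y0 : y 0 0 != 0. Proof. by rewrite -conjC_eq0; have [_ _ <- _] := Bmat_corners x y. Qed.
Let c0 : x N 0 + (y N 0)^* != 0. Proof. by have [_ _ _ <-] := Bmat_corners x y. Qed.
Let c0' : y N 0 + (x N 0)^* != 0.
Proof. by rewrite -conjC_eq0 rmorphD /= conjCK addrC. Qed.

Lemma Bmat_normal_form :
  exists (e1 e2 f1 f2 : 'cV[C]_k.+2) (r a b : R),
  [/\ orthonormal2 e1 e2, orthonormal2 f1 f2, [/\ 0 < r, 0 < a & 0 < b] &
      Bmat x y = row_mx e1 e2 *m mx2 (toC r) (toC a) (toC b) 0 *m adjmx (row_mx f1 f2)].
Proof.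
pose w := x - x N 0 *: e; pose z := y - y N 0 *: e.
have [wN w0] : w N 0 = 0 /\ w 0 0 = x 0 0.
  by rewrite !mxE eqxx (negbTE (ord0_neq_max k)) /= mulr1 mulr0 subrr subr0.
have [zN z0] : z N 0 = 0 /\ z 0 0 = y 0 0.
  by rewrite !mxE eqxx (negbTE (ord0_neq_max k)) /= mulr1 mulr0 subrr subr0.
have nonzero (u : 'cV[C]_k.+2) : u 0 0 != 0 -> u != 0.
  by apply: contraNneq => ->; rewrite mxE.
have [b b_gt0 wb] : exists2 b : R, 0 < b & cdot w w = toC b ^+ 2.
  by apply/cdot_sqr_realC/nonzero; rewrite w0.
have [a a_gt0 za] : exists2 a : R, 0 < a & cdot z z = toC a ^+ 2.
  by apply/cdot_sqr_realC/nonzero; rewrite z0.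
have [r [om [r_gt0 rom omc]]] := polarC c0.
have [a0 b0] : toC a != 0 /\ toC b != 0 by rewrite !toC_neq0 !gt_eqF.
exists (om *: e), ((toC b)^-1 *: w), e, ((om / toC a) *: z), r, a, b; split => //.
- apply: orthonormal2_scale.
  + by rewrite cdot_e_last_self mulr1 mulrC.
  + by rewrite wb fmorphV /= conj_realC -expr2 -exprMn mulVf ?expr1n.
  + by rewrite cdot_e_last wN.
- rewrite -[e in orthonormal2 e _]scale1r; apply: orthonormal2_scale.
  + by rewrite cdot_e_last_self conjC1 !mul1r.
  + by rewrite za rmorphM fmorphV /= conj_realC expr2 mulrACA !divfK // mulrC.
  + by rewrite cdot_e_last zN.
by rewrite Bmat_split; apply: rank2_phase_form; rewrite ?gt_eqF.
Qed.

Variables (s1 s2 : R) (u1 u2 v1 v2 : 'cV[C]_k.+2).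
Hypothesis svdB : svd2 (Bmat x y) s1 s2 u1 u2 v1 v2.

Lemma Bmat_svd2_heads :
  (toC s1 *: (u1 *m adjmx v1)) 0 0 != 0 /\ (toC s2 *: (u2 *m adjmx v2)) 0 0 != 0.
Proof.
have [le_s21 s2_gt0 ou ov dB] := svdB; have [u11 u22 _] := ou; have [v11 v22 _] := ov.
have [s1C s2C] : toC s1 != 0 /\ toC s2 != 0.
  by rewrite !toC_neq0 !gt_eqF // (lt_le_trans s2_gt0).
have [Bv1 Bv2] := decomp2_mulmx dB ov.
have := adjmx_decomp2 dB; rewrite !conj_realC adjmx_Bmat => /(decomp2_mulmx)/(_ ou)[B'u1 B'u2].
have u1_0 := Bmat_singular_head x0 c0 s1C Bv1 B'u1 (cdot_eq1_neq0 u11).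
have u2_0 := Bmat_singular_head x0 c0 s2C Bv2 B'u2 (cdot_eq1_neq0 u22).
have v1_0 := Bmat_singular_head y0 c0' s1C B'u1 Bv1 (cdot_eq1_neq0 v11).
have v2_0 := Bmat_singular_head y0 c0' s2C B'u2 Bv2 (cdot_eq1_neq0 v22).
by rewrite !mxE !big_ord1 !mxE !mulf_neq0 ?conjC_eq0.
Qed.

Lemma Bmat_svd2_gap : s2 < s1.
Proof.
have [le_s21 _ ou ov _] := svdB; rewrite lt_neqAle le_s21 andbT.
apply/eqP => s21; have := svdB; rewrite s21 => -[_ _ _ _ dB].
move/(congr1 (fun M : 'M[C]_k.+2 => M 0 0)): (decomp2_equal_triple dB ou ov).
have [B00 _ _ _] := Bmat_corners x y.
rewrite Bmat_triple00 mxE B00 mulr0 => /eqP; apply/negP.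
by rewrite !mulf_neq0 ?conjC_eq0.
Qed.

End BmatSVD.

(* n = k.+2; the paper's row/column 1 is index 0 and row/column n is ord_max. *)
Theorem lemma3p1 (R : realType) (k : nat) (x y : 'cV[R[i]]_k.+2) :
  Bmat x y 0 ord_max != 0 ->
  Bmat x y ord_max 0 != 0 ->
  Bmat x y ord_max ord_max != 0 ->
  [/\ \rank (Bmat x y) = 2%N,
      (exists (s1 s2 : R) (u1 u2 v1 v2 : 'cV[R[i]]_k.+2),
          svd2 (Bmat x y) s1 s2 u1 u2 v1 v2) &
      forall (s1 s2 : R) (u1 u2 v1 v2 : 'cV[R[i]]_k.+2),
        svd2 (Bmat x y) s1 s2 u1 u2 v1 v2 ->
        [/\ ((s1%:C)%C *: (u1 *m adjmx v1)) 0 0 != 0,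
            ((s2%:C)%C *: (u2 *m adjmx v2)) 0 0 != 0 &
            s2 < s1]].
Proof.
move=> B0N BN0 BNN.
have [e1 [e2 [f1 [f2 [r [a [b [oE oF [r_gt0 a_gt0 b_gt0] dB]]]]]]]] :=
  Bmat_normal_form B0N BN0 BNN.
split.
- rewrite dB mxrank_isometry_sandwich; last 2 first.
  + exact/orthonormal2_row_mx.
  + exact/orthonormal2_row_mx.
  by rewrite mxrank_unit // mx2_unit // toC_neq0 gt_eqF.
- by rewrite dB; apply: svd2_of_normal_form.
move=> s1 s2 u1 u2 v1 v2 svdB; have [head1 head2] := Bmat_svd2_heads B0N BN0 BNN svdB.
have gap := Bmat_svd2_gap B0N BN0 BNN svdB.
by split; [exact: head1 | exact: head2 | exact: gap].
Qed.
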